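(* Let $n\ge3$. Let $\mathcal M=(G,\{1\},\{1\},\emptyset)$ be a strongly connected linear compartmental model with $n-1$ compartments, input and output in compartment $1$, and no leaks. Let $H$ be obtained from $G$ by adding a leaf edge at compartment $1$ (new compartment $n$, edges $1\to n$ with parameter $a_{n1}$ and $n\to1$ with parameter $a_{1n}$), and let $\mathcal M'=(H,\{n\},\{1\},\emptyset)$. Let $A$ and $A'$ be the compartmental matrices of $\mathcal M$ and $\mathcal M'$. Define $c_0,\dots,c_{n-1}$ and $d_0,\dots,d_{n-2}$ by $\det(\lambda I-A)=\sum_{i=0}^{n-1}c_i\lambda^i$ and $\det((\lambda I-A)^{1,1})=\sum_{i=0}^{n-2}d_i\lambda^i$ (so $c_{n-1}=d_{n-2}=1$), and define $c^*_0,\dots,c^*_{n-1}$ and $d^*_0,\dots,d^*_{n-2}$ by $\det(\lambda I-A')=\lambda^n+\sum_{i=0}^{n-1}c^*_i\lambda^i$ and $\det((\lambda I-A')^{n,1})=\sum_{i=0}^{n-2}d^*_i\lambda^i$. Then: (1) (i) $d^*_i=(-1)^{n-1}a_{1n}d_i$ for $i=0,\dots,n-2$; (ii) $c^*_i=c_{i-1}+a_{1n}c_i+a_{n1}d_{i-1}$ for $i=1,\dots,n-1$; (iii) $c^*_0=c_0=0$. (2) If $c_{\mathcal M}$ and $c_{\mathcal M'}$ denote the coefficient maps of $\mathcal M$ and $\mathcal M'$, then the rank of the Jacobian matrix of $c_{\mathcal M'}$ at a generic point equals $2$ plus the rank of the Jacobian matrix of $c_{\mathcal M}$ at a generic point.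
   Context: A linear compartmental model $\mathcal M=(G,In,Out,Leak)$ consists of a finite directed graph $G=(V_G,E_G)$ without multi-edges, compartments $V_G=\{1,\dots,n\}$, and subsets $In,Out,Leak\subseteq V_G$; edge $j\to i$ carries parameter $a_{ij}$ and each $i\in Leak$ carries $a_{0i}$. The compartmental matrix $A$ has $A_{ii}=-\sum_{k:\,i\to k\in E_G}a_{ki}$ (minus $a_{0i}$ if $i\in Leak$), $A_{ij}=a_{ij}$ if $j\to i\in E_G$, $0$ otherwise. $B^{i,j}$ denotes $B$ with row $i$ and column $j$ removed. The input-output equations are $\det(\partial I-A)y_i=\sum_{j\in In}(-1)^{i+j}\det((\partial I-A)^{j,i})u_j$ ($i\in Out$), $\partial I$ the diagonal matrix of $d/dt$'s; the coefficient map sends the parameter vector in $\mathbb R^{|E_G|+|Leak|}$ to the vector of all non-constant coefficients (polynomials in the parameters) of these equations. Adding a leaf edge at $i$ to a graph with vertex set $\{1,\dots,n-1\}$ gives the graph with vertex set $\{1,\dots,n\}$ and edge set $E_G\cup\{i\to n,n\to i\}$. *)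

From HB Require Import structures.
From mathcomp Require Import all_boot all_order all_algebra.
From mathcomp Require Import mpoly.
Set Implicit Arguments. Unset Strict Implicit. Unset Printing Implicit Defensive.
Import GRing.Theory.
Local Open Scope ring_scope.

(* A directed graph on the compartments 'I_k (compartment i+1 of the paper
   is the ordinal i) is a relation E : rel 'I_k; E u v means u -> v is an edge. *)

(* Compartmental matrix of a leak-free model with graph E and parameter
   assignment a, where a i j is the parameter a_{ij} of the edge j -> i.
   (Values of a on non-edges are ignored.) *)
Definition comp_mx (T : comNzRingType) (k : nat) (E : rel 'I_k)
    (a : 'I_k -> 'I_k -> T) : 'M[T]_k :=
  \matrix_(i, j) (if i == j then - \sum_(l < k | E i l) a l i
                  else if E j i then a i j else 0).

(* Adding a leaf edge at i : the new compartment is ord_max, the old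
   compartment u is lift ord_max u (same numerical value). *)
Definition add_leaf (k : nat) (E : rel 'I_k) (i : 'I_k) : rel 'I_k.+1 :=
  fun u v =>
    match unlift ord_max u, unlift ord_max v with
    | Some u', Some v' => E u' v'
    | Some u', None => u' == i
    | None, Some v' => v' == i
    | None, None => false
    end.

(* Edge set, number of parameters (no leaks), and the parameter a_{ij} of the
   edge j -> i as a variable of the polynomial ring {mpoly R[npar E]};
   the variables of this ring are in bijection with the edges via enum_val. *)
Definition edges (k : nat) (E : rel 'I_k) : {set 'I_k * 'I_k} :=
  [set ij | E ij.1 ij.2].
Definition npar (k : nat) (E : rel 'I_k) : nat := #|edges E|.
Definition par (R : comNzRingType) (k : nat) (E : rel 'I_k) (i j : 'I_k)
  : {mpoly R[npar E]} :=
  \sum_(e < npar E | enum_val e == (j, i)) 'X_e.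

Definition pcoefs (T : nzRingType) (p : {poly T}) : seq T :=
  [seq p`_d | d <- iota 0 (size p)].

Definition mconstant (R : comNzRingType) (N : nat) (p : {mpoly R[N]}) : bool :=
  p == (p@_0%MM)%:MP.

(* All non-constant coefficients of the input-output equations
   det(dI - A) y_i = sum_{j in In} (-1)^(i+j) det((dI - A)^{j,i}) u_j, i in Out,
   of the leak-free model (E, In, Out, emptyset), as polynomials in the
   parameters. *)
Definition io_coefs (R : comNzRingType) (k : nat) (E : rel 'I_k)
    (In Out : {set 'I_k}) : seq {mpoly R[npar E]} :=
  let M := char_poly_mx (comp_mx E (@par R k E)) in
  [seq p <- flatten
      [seq pcoefs (\det M) ++
           flatten [seq pcoefs ((-1) ^+ (i + j) * \det (row' j (col' i M)))
                   | j : 'I_k <- enum In]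
      | i : 'I_k <- enum Out]
  | ~~ mconstant p].

Definition jacobian (R : realFieldType) (k : nat) (E : rel 'I_k)
    (In Out : {set 'I_k}) (x : 'I_(npar E) -> R)
  : 'M[R]_(size (io_coefs R E In Out), npar E) :=
  \matrix_(r, e) (mderiv e (io_coefs R E In Out)`_r).@[x].

(* r is the rank of the Jacobian of the coefficient map at a generic point,
   i.e. the maximal rank over all parameter points (attained on a dense
   Zariski-open set). *)
Definition generic_jac_rank (R : realFieldType) (k : nat) (E : rel 'I_k)
    (In Out : {set 'I_k}) (r : nat) : Prop :=
  (exists x, \rank (@jacobian R k E In Out x) = r) /\
  (forall x, (\rank (@jacobian R k E In Out x) <= r)%N).

(* Part (1) is a cofactor expansion of det(lambda I - A') along the row and the column of
   the new compartment n: their only nonzero entries are lambda + a_in, -a_in and -a_ni, and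
   deleting row and column n leaves lambda I - A with a_ni added at position (i, i).  Without
   leaks every column of A sums to zero, so det A = 0 and c_0 = 0.

   For part (2), a direction Z is in the kernel of the Jacobian at x iff every coefficient of
   the input-output equations, restricted to the line x + t Z, has no term in t.  Restriction
   to a line is a ring morphism into R[t], so these coefficients are those of the
   characteristic polynomial and of the minor of a compartmental matrix over R[t], for which
   part (1) holds verbatim.  Comparing the t-terms of both sides shows that the kernel of the
   new Jacobian contains every Z vanishing on the two leaf parameters whose restriction to the
   old parameters is in the old kernel, whence rank J' <= rank J + 2.  Conversely, if a_in is
   -t with t neither 0 nor a root of the minor polynomial d at the base point, then lambda + a_in
   is coprime to lambda d and the same comparison forces the converse inclusion. *)

From HB Require Import structures.
From mathcomp Require Import all_boot all_order all_algebra.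
From mathcomp Require Import mpoly ring zify.
From Stdlib Require Import Classical.
Set Implicit Arguments. Unset Strict Implicit. Unset Printing Implicit Defensive.
Import GRing.Theory Num.Theory.
Local Open Scope ring_scope.

Lemma row'_col'E (R : Type) (k : nat) (M : 'M[R]_k.+1) (i0 j0 : 'I_k.+1) (i j : 'I_k) :
  row' i0 (col' j0 M) i j = M (lift i0 i) (lift j0 j).
Proof. by rewrite !mxE. Qed.

Lemma lift_max_lift (k : nat) (i : 'I_k.+1) (j : 'I_k) :
  lift (lift ord_max i) (lift ord_max j) = lift ord_max (lift i j).
Proof. by apply/val_inj; rewrite /= /bump; have := ltn_ord i; have := ltn_ord j; lia. Qed.

Lemma lift_max_ord_max (k : nat) (i : 'I_k.+1) :
  lift (lift ord_max i) ord_max = ord_max :> 'I_k.+2.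
Proof. by apply/val_inj; rewrite /= /bump; have := ltn_ord i; lia. Qed.

Lemma char_poly_row'_col' (T : comNzRingType) (k : nat) (M : 'M[T]_k.+1) i :
  \det (row' i (col' i (char_poly_mx M))) = char_poly (row' i (col' i M)).
Proof.
congr (\det _); apply/matrixP => p q.
by rewrite row'_col'E !mxE (inj_eq lift_inj).
Qed.

Lemma ord2 (b : 'I_2) : b = 0 \/ b = 1.
Proof. by case: b => [[|[|//]] lt_b]; [left|right]; apply/val_inj. Qed.

Lemma all_pcoefsP (T : nzRingType) (P : pred T) (p : {poly T}) :
  P 0 -> reflect (forall l, P p`_l) (all P (pcoefs p)).
Proof.
move=> P0; apply: (iffP allP) => [Pp l|Pp _ /mapP[l _ ->] //].
have [lt_l|ge_l] := ltnP l (size p); last by rewrite nth_default.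
by apply: Pp; apply/mapP; exists l; rewrite // mem_iota.
Qed.

Lemma submx_colker (F : fieldType) m1 m2 n (A : 'M[F]_(m1, n)) (B : 'M[F]_(m2, n)) :
  (forall Z : 'cV_n, B *m Z = 0 -> A *m Z = 0) -> (A <= B)%MS.
Proof.
move=> kerBA; rewrite submxE; move: (cokermx B) (mulmx_coker B) => C BC.
apply/eqP/matrixP => p q; have := kerBA (col q C); rewrite !colE !mulmxA BC mul0mx.
by move=> /(_ erefl) /matrixP /(_ p 0); rewrite -colE !mxE.
Qed.

Lemma row_free_rowsub (F : fieldType) m n (f : 'I_m -> 'I_n) :
  injective f -> row_free (rowsub f (1%:M : 'M[F]_n)).
Proof.
move=> f_inj; apply/row_freeP; exists (rowsub f 1%:M)^T.
by apply/matrixP => p q; rewrite mul_rowsub_mx mul1mx !mxE (inj_eq f_inj) eq_sym.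
Qed.

Lemma ex_extension (A B : finType) (T : Type) (f : A -> B) (w : A -> T) (t0 : T) :
  injective f -> exists g : B -> T, forall a, g (f a) = w a.
Proof.
move=> f_inj; exists (fun b => if [pick a | f a == b] is Some a then w a else t0) => a.
by case: pickP => [a' /eqP/f_inj -> //|/(_ a)]; rewrite eqxx.
Qed.

Lemma ex_nonroot (R : numDomainType) (p : {poly R}) :
  p != 0 -> exists2 t, t != 0 & ~~ root p t.
Proof.
move=> p_neq0; pose s := [seq j.+1%:R | j <- iota 0 (size p)] : seq R.
have [p_s|/allPn[_ /mapP[j _ ->] nroot]] := boolP (all (root p) s); last first.
  by exists j.+1%:R; rewrite ?pnatr_eq0.
have s_uniq : uniq s.
  by rewrite map_inj_uniq ?iota_uniq // => j1 j2 /eqP; rewrite eqr_nat eqSS => /eqP.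
by have := max_poly_roots p_neq0 p_s s_uniq; rewrite size_map size_iota ltnn.
Qed.

Lemma bounded_nat_fun_has_max (T : Type) (f : T -> nat) (b : nat) (x0 : T) :
  (forall x, f x <= b)%N -> exists x, forall y, (f y <= f x)%N.
Proof.
move=> f_le_b; apply: NNPP => no_max.
have up j : exists x, (j <= f x)%N.
  elim: j => [|j [x le_jx]]; first by exists x0.
  have /not_all_ex_not[y /negP] : ~ forall y, (f y <= f x)%N.
    by move=> x_max; apply: no_max; exists x.
  by rewrite -ltnNge => lt_xy; exists y; apply: leq_ltn_trans lt_xy.
by have [x] := up b.+1; rewrite ltnNge f_le_b.
Qed.

Section CompartmentalMatrix.
Variables (T : comNzRingType) (k : nat) (E : rel 'I_k).
Hypothesis E_irr : irreflexive E.

Lemma comp_mx_col_sum (a : 'I_k -> 'I_k -> T) j : \sum_i comp_mx E a i j = 0.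
Proof.
rewrite (bigD1 j) //= mxE eqxx.
rewrite (eq_bigr (fun i => if E j i then a i j else 0)); last first.
  by move=> i /negbTE ij; rewrite mxE ij.
rewrite -big_mkcondr /= addrC (eq_bigl (E j)) ?subrr // => i.
by case: eqP => // ->; rewrite E_irr.
Qed.

Lemma det_comp_mx (a : 'I_k -> 'I_k -> T) : (0 < k)%N -> \det (comp_mx E a) = 0.
Proof.
move=> k_gt0; set A := comp_mx E a; pose i0 := Ordinal k_gt0.
pose u : 'rV[T]_k := const_mx 1.
have uA : u *m A = 0.
  apply/rowP => j; rewrite !mxE -[RHS](comp_mx_col_sum a j).
  by apply: eq_bigr => i _; rewrite mxE mul1r.
have := congr1 (fun M : 'rV_k => M 0 i0) (mulmxA u A (\adj A)).
by rewrite mul_mx_adj uA mul0mx mul_mx_scalar !mxE mulr1.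
Qed.

Lemma char_poly_comp_mx_coef0 (a : 'I_k -> 'I_k -> T) :
  (0 < k)%N -> (char_poly (comp_mx E a))`_0 = 0.
Proof. by move=> k_gt0; rewrite char_poly_det det_comp_mx ?mulr0. Qed.

End CompartmentalMatrix.

Lemma eq_comp_mx (T : comNzRingType) (k : nat) (E : rel 'I_k) (a b : 'I_k -> 'I_k -> T) :
  a =2 b -> comp_mx E a = comp_mx E b.
Proof.
move=> ab; apply/matrixP => u v; rewrite !mxE ab; case: eqP => // _.
by congr (- _); apply: eq_bigr => w _; rewrite ab.
Qed.

Lemma map_comp_mx (S T : comNzRingType) (f : {rmorphism S -> T}) k (E : rel 'I_k) a :
  map_mx f (comp_mx E a) = comp_mx E (fun u v => f (a u v)).
Proof.
apply/matrixP => u v; rewrite !mxE; case: eqP => _; first by rewrite rmorphN rmorph_sum.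
by case: (E v u); rewrite ?rmorph0.
Qed.

Lemma in_edges (k : nat) (F : rel 'I_k) u v : ((u, v) \in edges F) = F u v.
Proof. by rewrite inE. Qed.

Lemma par_enum_rank (R : comNzRingType) (k : nat) (F : rel 'I_k) x0
    (x0_in : x0 \in edges F) u v :
  F v u -> par R F u v = 'X_(enum_rank_in x0_in (v, u)).
Proof.
move=> Fvu; rewrite /par (big_pred1 (enum_rank_in x0_in (v, u))) // => e /=.
apply/eqP/eqP => [eE|->]; last by rewrite enum_rankK_in ?in_edges.
by apply: enum_val_inj; rewrite enum_rankK_in ?in_edges.
Qed.

Lemma par_notin_edges (R : comNzRingType) (k : nat) (F : rel 'I_k) u v :
  ~~ F v u -> par R F u v = 0.
Proof.
move=> Fvu; rewrite /par big1 // => e /eqP eE.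
by move: (enum_valP e); rewrite eE in_edges (negbTE Fvu).
Qed.

Lemma eq_jacobian (R : realFieldType) (k : nat) (E : rel 'I_k) In Out (x1 x2 : 'I_(npar E) -> R) :
  x1 =1 x2 -> jacobian In Out x1 = jacobian In Out x2.
Proof. by move=> x12; apply/matrixP => r e; rewrite !mxE (meval_eq _ x12). Qed.

(** * Adding a leaf: characteristic polynomials *)

Section AddLeaf.
Variables (k : nat) (E : rel 'I_k) (i : 'I_k).
Local Notation E' := (add_leaf E i).

Lemma add_leaf_lift u v : E' (lift ord_max u) (lift ord_max v) = E u v.
Proof. by rewrite /add_leaf !liftK. Qed.

Lemma add_leaf_to_max u : E' (lift ord_max u) ord_max = (u == i).
Proof. by rewrite /add_leaf liftK unlift_none. Qed.

Lemma add_leaf_from_max v : E' ord_max (lift ord_max v) = (v == i).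
Proof. by rewrite /add_leaf liftK unlift_none. Qed.

Lemma add_leaf_max_max : E' ord_max ord_max = false.
Proof. by rewrite /add_leaf unlift_none. Qed.

End AddLeaf.

Section LeafExpansion.
Variables (T : comNzRingType) (k : nat) (E : rel 'I_k.+1) (i : 'I_k.+1).
Variable a : 'I_k.+2 -> 'I_k.+2 -> T.
Local Notation l := (lift ord_max).
Local Notation A := (comp_mx E (fun u v => a (l u) (l v))).
Local Notation N := (char_poly_mx (comp_mx (add_leaf E i) a)).
Local Notation a_in := (a (l i) ord_max).
Local Notation a_ni := (a ord_max (l i)).
Local Notation d := (\det (row' i (col' i (char_poly_mx A)))).

Lemma char_poly_mx_leaf_lift u v : N (l u) (l v) =
  char_poly_mx A u v + (if (u == i) && (v == i) then a_ni%:P else 0).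
Proof.
rewrite !mxE (inj_eq lift_inj) add_leaf_lift.
have [<-|uv] := eqVneq u v; last first.
  have -> : (u == i) && (v == i) = false by apply: contraNF uv => /andP[/eqP-> /eqP->].
  by rewrite addr0.
rewrite andbb big_mkcond (bigD1_ord ord_max) //= add_leaf_to_max.
under eq_bigr do rewrite add_leaf_lift.
rewrite -big_mkcond /=; case: eqP => [->|_]; last by rewrite add0r addr0.
by rewrite !polyCN polyCD !opprK addrAC addrA.
Qed.

Lemma char_poly_mx_leaf_max_lift v : N ord_max (l v) = - (if v == i then a_ni%:P else 0).
Proof.
rewrite !mxE eq_liftF add_leaf_to_max sub0r.
by case: eqP => [->|].
Qed.

Lemma char_poly_mx_leaf_lift_max u : N (l u) ord_max = - (if u == i then a_in%:P else 0).
Proof.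
rewrite !mxE lift_eqF add_leaf_from_max sub0r.
by case: eqP => [->|].
Qed.

Lemma char_poly_mx_leaf_max_max : N ord_max ord_max = 'X + a_in%:P.
Proof.
rewrite !mxE eqxx mulr1n big_mkcond (bigD1_ord ord_max) //= add_leaf_max_max add0r.
under eq_bigr do rewrite add_leaf_from_max.
by rewrite -big_mkcond big_pred1_eq polyCN opprK.
Qed.

Lemma det_leaf_minor : \det (row' ord_max (col' (l i) N)) = ((-1) ^+ (i + k.+1) * a_in)%:P * d.
Proof.
rewrite (expand_det_col _ ord_max) (bigD1 i) //= big1 ?addr0 => [|u /negbTE ui]; last first.
  by rewrite row'_col'E lift_max_ord_max char_poly_mx_leaf_lift_max ui oppr0 mul0r.
rewrite row'_col'E lift_max_ord_max char_poly_mx_leaf_lift_max eqxx /cofactor.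
have -> : row' i (col' ord_max (row' ord_max (col' (l i) N))) = row' i (col' i (char_poly_mx A)).
  apply/matrixP => p q; rewrite !row'_col'E lift_max_lift char_poly_mx_leaf_lift.
  by rewrite lift_eqF addr0.
by rewrite polyCM rmorph_sign addnS exprS /=; ring.
Qed.

Lemma det_leaf_drop_max : \det (row' ord_max (col' ord_max N)) = char_poly A + a_ni%:P * d.
Proof.
rewrite /char_poly (expand_det_row _ i) [in RHS](expand_det_row _ i).
have cofE j : cofactor (row' ord_max (col' ord_max N)) i j = cofactor (char_poly_mx A) i j.
  rewrite /cofactor; congr (_ * \det _); apply/matrixP => p q.
  by rewrite !row'_col'E char_poly_mx_leaf_lift lift_eqF addr0.
under eq_bigr do rewrite cofE row'_col'E char_poly_mx_leaf_lift eqxx mulrDl.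
rewrite big_split /=; congr (_ + _).
rewrite (bigD1 i) //= eqxx big1 ?addr0; last by move=> j /negbTE ->; rewrite mul0r.
by rewrite /cofactor addnn -signr_odd odd_double mul1r.
Qed.

Lemma char_poly_add_leaf : char_poly (comp_mx (add_leaf E i) a) =
  ('X + a_in%:P) * char_poly A + a_ni%:P * ('X * d).
Proof.
rewrite /char_poly (expand_det_row _ ord_max) (bigD1_ord ord_max) //= (bigD1 i) //=.
rewrite big1 ?addr0 => [|v /negbTE vi]; last first.
  by rewrite char_poly_mx_leaf_max_lift vi oppr0 mul0r.
rewrite char_poly_mx_leaf_max_max char_poly_mx_leaf_max_lift eqxx /cofactor.
rewrite det_leaf_drop_max det_leaf_minor addnn -signr_odd odd_double mul1r lift_max.
rewrite [(k.+1 + _)%N]addnC polyCM rmorph_sign -mulrA signrMK -/(char_poly A).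
ring.
Qed.

End LeafExpansion.

(** * Restriction of polynomials to a line *)

Definition meval_line (R : comNzRingType) (n : nat) (x z : 'I_n -> R)
  (p : {mpoly R[n]}) : {poly R} :=
  mmap (@polyC R) (fun e => (x e)%:P + (z e)%:P * 'X) p.

HB.instance Definition _ (R : comNzRingType) (n : nat) (x z : 'I_n -> R) :=
  GRing.RMorphism.copy (meval_line x z) (mmap (@polyC R) (fun e => (x e)%:P + (z e)%:P * 'X)).

Section LineRestriction.
Variables (R : comNzRingType) (n : nat) (x z : 'I_n -> R).
Local Notation meval_line := (meval_line x z).

Definition dirderiv (p : {mpoly R[n]}) : R := \sum_e z e * (p^`M(e)).@[x].

Lemma meval_lineC c : meval_line c%:MP = c%:P.
Proof. exact: mmapC. Qed.

Lemma meval_lineXU e : meval_line 'X_e = (x e)%:P + (z e)%:P * 'X.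
Proof. by rewrite /meval_line mmapX mmap1U. Qed.

Lemma coef0_meval_line p : (meval_line p)`_0 = p.@[x].
Proof.
elim/mpolyind: p => [|c m p _ _ ih]; first by rewrite raddf0 meval0 coef0.
rewrite raddfD /= coefD ih mevalD mevalZ -mul_mpolyC rmorphM /= meval_lineC coefCM.
rewrite /meval_line mmapX mevalX /mmap1 -horner_coef0 horner_prod; congr (c * _ + _).
by apply: eq_bigr => e _; rewrite horner_exp hornerD hornerC hornerM hornerX mulr0 addr0.
Qed.

Definition point_derivation (L : {mpoly R[n]} -> R) :=
  [/\ forall p q, L (p + q) = L p + L q, forall c p, L (c *: p) = c * L p
    & forall p q, L (p * q) = p.@[x] * L q + q.@[x] * L p].

Lemma point_derivation_eq L1 L2 : point_derivation L1 -> point_derivation L2 ->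
  (forall e, L1 'X_e = L2 'X_e) -> L1 =1 L2.
Proof.
have der0 L : point_derivation L -> L 0 = 0.
  by case=> LD _ _; apply/(@addrI _ (L 0)); rewrite -LD !addr0.
have der1 L : point_derivation L -> L 1 = 0.
  case=> _ _ LM; have := LM 1 1; rewrite mulr1 meval1 mul1r => L11.
  by apply/(@addrI _ (L 1)); rewrite -L11 addr0.
move=> D1 D2 LX; have [L1D L1Z L1M] := D1; have [L2D L2Z L2M] := D2.
elim/mpolyind => [|c m p _ _ ih]; first by rewrite (der0 _ D1) (der0 _ D2).
rewrite L1D L2D L1Z L2Z ih mpolyXE_id; congr (c * _ + _).
apply: (big_ind (fun q => L1 q = L2 q)); first by rewrite (der1 _ D1) (der1 _ D2).
  by move=> p1 p2 h1 h2; rewrite L1M L2M h1 h2.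
move=> e _; elim: (m e) => [|j ihj]; first by rewrite expr0 (der1 _ D1) (der1 _ D2).
by rewrite exprS L1M L2M ihj LX.
Qed.

Lemma point_derivation_dirderiv : point_derivation dirderiv.
Proof.
split=> [p q|c p|p q]; rewrite /dirderiv.
- by rewrite -big_split; apply: eq_bigr => e _; rewrite mderivD mevalD mulrDr.
- by rewrite mulr_sumr; apply: eq_bigr => e _; rewrite mderivZ mevalZ mulrCA.
- rewrite !mulr_sumr -big_split; apply: eq_bigr => e _.
  by rewrite mderivM mevalD !mevalM /=; ring.
Qed.

Lemma point_derivation_coef1_meval_line : point_derivation (fun p => (meval_line p)`_1).
Proof.
split=> [p q|c p|p q] /=.
- by rewrite raddfD /= coefD.
- by rewrite -mul_mpolyC rmorphM /= meval_lineC coefCM.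
rewrite rmorphM /= coefM !big_ord_recr big_ord0 /= add0r !coef0_meval_line.
by rewrite subn0 [_ * q.@[x]]mulrC.
Qed.

Lemma coef1_meval_line p : (meval_line p)`_1 = dirderiv p.
Proof.
apply: (point_derivation_eq point_derivation_coef1_meval_line point_derivation_dirderiv) => e.
rewrite meval_lineXU coefD coefC coefCM coefX add0r mulr1 /dirderiv (bigD1 e) //=.
rewrite mderivX mnm1E eqxx mulr1n scale1r mevalX big1 ?mulr1 => [|j _]; last first.
  by rewrite mnmBE mnm1E; case: eqP; rewrite ?subnn expr0.
rewrite big1 ?addr0 // => j /negbTE je.
by rewrite mderivX mnm1E eq_sym je scale0r meval0 mulr0.
Qed.

End LineRestriction.

Lemma eq_meval_line (R : comNzRingType) (n : nat) (x1 x2 z1 z2 : 'I_n -> R) :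
  x1 =1 x2 -> z1 =1 z2 -> meval_line x1 z1 =1 meval_line x2 z2.
Proof.
move=> x12 z12 p; rewrite /meval_line /mmap; apply: eq_bigr => m _; congr (_ * _).
by apply: eq_bigr => e _; rewrite x12 z12.
Qed.

(* The coefficient of t^i of P in R[t][lambda], as a polynomial in lambda. *)
Definition inner_coef (R : nzRingType) (i : nat) (P : {poly {poly R}}) : {poly R} :=
  map_poly (coefp i) P.

Section InnerCoef.
Variable R : comNzRingType.
Implicit Types (P : {poly {poly R}}) (q : {poly R}).

Lemma coef_inner_coef i P l : (inner_coef i P)`_l = P`_l`_i.
Proof. by rewrite coef_map_id0 // /coefp coef0. Qed.

Lemma inner_coefD i P1 P2 : inner_coef i (P1 + P2) = inner_coef i P1 + inner_coef i P2.
Proof. exact: raddfD. Qed.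

Lemma inner_coefN i P : inner_coef i (- P) = - inner_coef i P.
Proof. exact: raddfN. Qed.

Lemma inner_coefXM i P : inner_coef i ('X * P) = 'X * inner_coef i P.
Proof.
by apply/polyP => -[|l]; rewrite coef_inner_coef !coefXM ?coef0 // coef_inner_coef.
Qed.

Lemma inner_coef1_mul_line (a b : R) P :
  inner_coef 1 ((a%:P + b%:P * 'X)%:P * P) = a *: inner_coef 1 P + b *: inner_coef 0 P.
Proof.
apply/polyP => l; rewrite coef_inner_coef coefCM coefD !coefZ !coef_inner_coef.
by rewrite mulrDl coefD coefCM -mulrA coefCM coefXM.
Qed.

End InnerCoef.

Lemma inner_coef0_char_poly_line (R : comNzRingType) (k : nat) (E : rel 'I_k.+1) i
    (x z : 'I_(npar E) -> R) :
  inner_coef 0 (char_poly (row' i (col' i (comp_mx E (fun u v => meval_line x z (par R E u v)))))) =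
  char_poly (row' i (col' i (comp_mx E (fun u v => (par R E u v).@[x])))).
Proof.
rewrite /inner_coef map_char_poly map_row' map_col' map_comp_mx.
by congr (char_poly (row' i (col' i _))); apply: eq_comp_mx => u v; rewrite /= coef0_meval_line.
Qed.

(** * The kernel of the Jacobian *)

Section JacobianKernel.
Variables (R : realFieldType) (k : nat) (E : rel 'I_k).
Variables (x : 'I_(npar E) -> R) (Z : 'cV[R]_(npar E)).
Local Notation z := (fun e => Z e 0).
Local Notation A := (comp_mx E (fun u v => meval_line x z (par R E u v))).

Lemma jacobian_mulmx_eq0 In Out : (jacobian In Out x *m Z == 0) =
  all (fun p => (meval_line x z p)`_1 == 0) (io_coefs R E In Out).
Proof.
have jacZ r : (jacobian In Out x *m Z) r 0 = (meval_line x z (io_coefs R E In Out)`_r)`_1.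
  by rewrite coef1_meval_line !mxE; apply: eq_bigr => e _; rewrite mxE mulrC.
apply/eqP/allP => [JZ p /(nthP 0)[r ltr <-]|JZ].
  by rewrite -(jacZ (Ordinal ltr)) JZ mxE.
by apply/matrixP => r j; rewrite ord1 jacZ mxE; apply/eqP/JZ/mem_nth.
Qed.

Lemma all_coef1_meval_lineP (Q : {poly {mpoly R[npar E]}}) :
  reflect (inner_coef 1 (map_poly (meval_line x z) Q) = 0)
    (all (fun p => ~~ mconstant p ==> ((meval_line x z p)`_1 == 0)) (pcoefs Q)).
Proof.
have constE p : (~~ mconstant p ==> ((meval_line x z p)`_1 == 0)) = ((meval_line x z p)`_1 == 0).
  by case: (boolP (mconstant p)) => //= /eqP->; rewrite meval_lineC coefC eqxx.
have P0 : (meval_line x z 0)`_1 == 0 by rewrite raddf0 coef0.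
rewrite (eq_all constE).
apply: (iffP (@all_pcoefsP _ (fun p => (meval_line x z p)`_1 == 0) Q P0)) => [Q1|Q1 l].
  by apply/polyP => l; rewrite coef_inner_coef coef_map /= coef0; apply/eqP.
by have := congr1 (coefp l) Q1; rewrite /= coef_inner_coef coef_map /= coef0 => ->.
Qed.

Lemma jacobian_set1_mulmx_eq0 (i j : 'I_k) :
  (jacobian [set j] [set i] x *m Z == 0) =
  (inner_coef 1 (char_poly A) == 0) &&
  (inner_coef 1 (\det (row' j (col' i (char_poly_mx A)))) == 0).
Proof.
rewrite jacobian_mulmx_eq0 /io_coefs !enum_set1 /= !cats0 all_filter all_cat.
rewrite !(sameP (all_coef1_meval_lineP _) eqP) -/(char_poly _) map_char_poly map_comp_mx.
rewrite rmorphM rmorph_sign /= -det_map_mx map_row' map_col' map_char_poly_mx map_comp_mx.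
by rewrite -signr_odd mulr_sign /=; case: odd; rewrite ?inner_coefN ?oppr_eq0.
Qed.

End JacobianKernel.

(** * Adding a leaf: the rank of the Jacobian *)

Section LeafEdges.
Variables (k : nat) (E : rel 'I_k) (i : 'I_k).
Local Notation E' := (add_leaf E i).
Local Notation l := (lift ord_max).

Lemma edge_to_leaf_mem : (l i, ord_max) \in edges E'.
Proof. by rewrite in_edges add_leaf_to_max. Qed.

Definition edge_index (uv : 'I_k.+1 * 'I_k.+1) : 'I_(npar E') :=
  enum_rank_in edge_to_leaf_mem uv.

Definition old_edge (e : 'I_(npar E)) : 'I_(npar E') :=
  edge_index (l (enum_val e).1, l (enum_val e).2).
Definition edge_to_leaf : 'I_(npar E') := edge_index (l i, ord_max).
Definition edge_from_leaf : 'I_(npar E') := edge_index (ord_max, l i).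

Lemma par_to_leaf (R : comNzRingType) : par R E' ord_max (l i) = 'X_edge_to_leaf.
Proof. by rewrite (par_enum_rank _ edge_to_leaf_mem) // add_leaf_to_max. Qed.

Lemma par_from_leaf (R : comNzRingType) : par R E' (l i) ord_max = 'X_edge_from_leaf.
Proof. by rewrite (par_enum_rank _ edge_to_leaf_mem) // add_leaf_from_max. Qed.

Lemma meval_line_par_lift (R : comNzRingType) (x z : 'I_(npar E') -> R) u v :
  meval_line x z (par R E' (l u) (l v)) =
  meval_line (x \o old_edge) (z \o old_edge) (par R E u v).
Proof.
have [Evu|nEvu] := boolP (E v u); last first.
  by rewrite !par_notin_edges ?add_leaf_lift // !raddf0.
have vu_in : (v, u) \in edges E by rewrite in_edges.
rewrite (par_enum_rank _ edge_to_leaf_mem) ?add_leaf_lift // (par_enum_rank _ vu_in) //.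
by rewrite !meval_lineXU /= /old_edge enum_rankK_in.
Qed.

Definition leaf_edge_pair (j : 'I_(npar E + 2)) : 'I_k.+1 * 'I_k.+1 :=
  match split j with
  | inl e => (l (enum_val e).1, l (enum_val e).2)
  | inr b => if b == 0 then (l i, ord_max) else (ord_max, l i)
  end.

Definition leaf_edge (j : 'I_(npar E + 2)) : 'I_(npar E') := edge_index (leaf_edge_pair j).

Lemma leaf_edge_pair_mem j : leaf_edge_pair j \in edges E'.
Proof.
rewrite /leaf_edge_pair; case: split => [e|b].
  by rewrite in_edges add_leaf_lift -in_edges -surjective_pairing enum_valP.
by case: ifP; rewrite in_edges ?add_leaf_to_max ?add_leaf_from_max.
Qed.

Lemma leaf_edge_pair_inj : injective leaf_edge_pair.
Proof.
move=> j1 j2; rewrite /leaf_edge_pair -[j1]splitK -[j2]splitK !unsplitK.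
case: (split j1) (split j2) => [e1|b1] [e2|b2] /= /eqP.
- rewrite xpair_eqE !(inj_eq lift_inj) -xpair_eqE -!surjective_pairing.
  by move=> /eqP /enum_val_inj ->.
- by case: ifP; rewrite xpair_eqE ?lift_eqF ?eq_liftF ?andbF.
- by case: ifP; rewrite xpair_eqE ?lift_eqF ?eq_liftF ?andbF.
have [->|->] := ord2 b1; have [->|->] := ord2 b2;
  by rewrite //= xpair_eqE ?lift_eqF ?eq_liftF ?andbF.
Qed.

Lemma leaf_edge_inj : injective leaf_edge.
Proof.
move=> j1 j2 /(congr1 enum_val); rewrite !enum_rankK_in ?leaf_edge_pair_mem //.
exact: leaf_edge_pair_inj.
Qed.

Lemma leaf_edge_lshift e : leaf_edge (lshift 2 e) = old_edge e.
Proof. by rewrite /leaf_edge /leaf_edge_pair -[lshift 2 e]/(unsplit (inl e)) unsplitK. Qed.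

Lemma leaf_edge_rshift1 : leaf_edge (rshift (npar E) 1) = edge_from_leaf.
Proof. by rewrite /leaf_edge /leaf_edge_pair -[rshift _ 1]/(unsplit (inr 1)) unsplitK. Qed.

Lemma rowsub_leaf_edge (R : Type) m (Z : 'M[R]_(npar E', m)) :
  rowsub leaf_edge Z = col_mx (rowsub old_edge Z)
    (rowsub (fun b : 'I_2 => if b == 0 then edge_to_leaf else edge_from_leaf) Z).
Proof.
apply/matrixP => p q; rewrite !mxE /leaf_edge /leaf_edge_pair.
by case: split => [e|b]; rewrite !mxE //; case: ifP.
Qed.

End LeafEdges.

Section LeafLine.
Variables (R : comNzRingType) (k : nat) (E : rel 'I_k.+1) (i : 'I_k.+1).
Variables (x z : 'I_(npar (add_leaf E i)) -> R).
Local Notation E' := (add_leaf E i).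
Local Notation A := (comp_mx E (fun u v =>
  meval_line (x \o old_edge i) (z \o old_edge i) (par R E u v))).
Local Notation A' := (comp_mx E' (fun u v => meval_line x z (par R E' u v))).
Local Notation d := (\det (row' i (col' i (char_poly_mx A)))).
Local Notation to := (edge_to_leaf E i).
Local Notation from := (edge_from_leaf E i).

Lemma comp_mx_leaf_line_lift :
  comp_mx E (fun u v => meval_line x z (par R E' (lift ord_max u) (lift ord_max v))) = A.
Proof. by apply: eq_comp_mx => u v; rewrite meval_line_par_lift. Qed.

Lemma inner_coef1_char_poly_leaf_line : inner_coef 1 (char_poly A') =
  'X * inner_coef 1 (char_poly A) + x from *: inner_coef 1 (char_poly A) +
  z from *: inner_coef 0 (char_poly A) + x to *: ('X * inner_coef 1 d) +
  z to *: ('X * inner_coef 0 d).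
Proof.
rewrite char_poly_add_leaf comp_mx_leaf_line_lift par_from_leaf par_to_leaf !meval_lineXU.
by rewrite mulrDl !inner_coefD !inner_coefXM !inner_coef1_mul_line !inner_coefXM !addrA.
Qed.

Lemma inner_coef1_det_leaf_line :
  inner_coef 1 (\det (row' ord_max (col' (lift ord_max i) (char_poly_mx A')))) =
  ((-1) ^+ (i + k.+1) * x from) *: inner_coef 1 d +
  ((-1) ^+ (i + k.+1) * z from) *: inner_coef 0 d.
Proof.
rewrite det_leaf_minor comp_mx_leaf_line_lift par_from_leaf meval_lineXU.
rewrite -inner_coef1_mul_line; congr (inner_coef 1 (_%:P * _)).
by rewrite !polyCM rmorph_sign mulrDr mulrA.
Qed.

Lemma inner_coef_top_minor_leaf_line : (inner_coef 1 d)`_k = 0 /\ (inner_coef 0 d)`_k = 1.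
Proof.
have d_top : d`_k = 1.
  rewrite char_poly_row'_col'; have /monicP := char_poly_monic (row' i (col' i A)).
  by rewrite lead_coefE size_char_poly.
by rewrite !coef_inner_coef d_top !coefC.
Qed.

End LeafLine.

Section LeafLineKernel.
Variables (R : idomainType) (k : nat) (E : rel 'I_k.+1) (i : 'I_k.+1).
Variables (x z : 'I_(npar (add_leaf E i)) -> R).
Local Notation E' := (add_leaf E i).
Local Notation A := (comp_mx E (fun u v =>
  meval_line (x \o old_edge i) (z \o old_edge i) (par R E u v))).
Local Notation A' := (comp_mx E' (fun u v => meval_line x z (par R E' u v))).
Local Notation d := (\det (row' i (col' i (char_poly_mx A)))).
Local Notation to := (edge_to_leaf E i).
Local Notation from := (edge_from_leaf E i).

Lemma leaf_line_ker : x from != 0 -> ~~ root (inner_coef 0 d) (- x from) ->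
  inner_coef 1 (char_poly A') = 0 ->
  inner_coef 1 (\det (row' ord_max (col' (lift ord_max i) (char_poly_mx A')))) = 0 ->
  [/\ z from = 0, z to = 0, inner_coef 1 (char_poly A) = 0 & inner_coef 1 d = 0].
Proof.
move=> from_neq0 d0_nonroot.
rewrite inner_coef1_char_poly_leaf_line inner_coef1_det_leaf_line => cs1 ds1.
have [d1_top d0_top] := inner_coef_top_minor_leaf_line x z.
have z_from0 : z from = 0.
  move: (congr1 (coefp k) ds1); rewrite /= coefD !coefZ d1_top d0_top coef0 mulr0 add0r mulr1.
  by move/eqP; rewrite mulf_eq0 signr_eq0 => /eqP.
have d1 : inner_coef 1 d = 0.
  move: ds1; rewrite z_from0 mulr0 scale0r addr0 => /eqP.
  by rewrite scale_poly_eq0 mulf_eq0 signr_eq0 (negbTE from_neq0) => /eqP.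
move: cs1; rewrite z_from0 d1 scale0r mulr0 scaler0 !addr0 -mul_polyC -mulrDl => cs1.
have z_to0 : z to = 0.
  move: (congr1 (horner^~ (- x from)) cs1).
  rewrite /= hornerD hornerM hornerZ hornerM !hornerE addNr mul0r add0r => /eqP.
  have d0 : (inner_coef 0 d).[- x from] != 0 := d0_nonroot.
  by rewrite !mulf_eq0 oppr_eq0 (negbTE from_neq0) (negbTE d0) !orbF => /eqP.
move: cs1; rewrite z_to0 scale0r addr0 => /eqP; rewrite mulf_eq0 => /orP[|/eqP //].
by rewrite (negbTE (monic_neq0 (monicXaddC _))).
Qed.

End LeafLineKernel.

Section LeafRank.
Variables (R : realFieldType) (k : nat) (E : rel 'I_k.+1) (i : 'I_k.+1).
Local Notation E' := (add_leaf E i).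
Local Notation J := (@jacobian R _ E [set i] [set i]).
Local Notation J' := (@jacobian R _ E' [set ord_max] [set lift ord_max i]).

Definition leaf_block_jacobian (y : 'I_(npar E) -> R) :=
  block_mx (J y) 0 0 (1%:M : 'M_2) *m rowsub (leaf_edge i) 1%:M.

Lemma rank_leaf_block_jacobian y : \rank (leaf_block_jacobian y) = (\rank (J y) + 2)%N.
Proof.
rewrite /leaf_block_jacobian mxrankMfree; last exact/row_free_rowsub/leaf_edge_inj.
by rewrite (rank_diag_block_mx (J y) (1%:M : 'M[R]_2)) mxrank1.
Qed.

Lemma leaf_block_jacobian_mulmx_eq0 y (Z : 'cV_(npar E')) : (leaf_block_jacobian y *m Z == 0) =
  [&& J y *m rowsub (old_edge i) Z == 0, Z (edge_to_leaf E i) 0 == 0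
    & Z (edge_from_leaf E i) 0 == 0].
Proof.
rewrite -mulmxA mul_rowsub_mx mul1mx rowsub_leaf_edge mul_block_col !mul0mx addr0 add0r.
rewrite mul1mx col_mx_eq0; congr (_ && _); apply/eqP/andP => [Z0|[/eqP to0 /eqP from0]].
  by move/matrixP: Z0 => Z0; split; apply/eqP; [move: (Z0 0 0)|move: (Z0 1 0)]; rewrite !mxE.
by apply/matrixP => b q; rewrite !mxE ord1; have [->|->] := ord2 b.
Qed.

Lemma old_jacobian_mulmx_eq0 (x : 'I_(npar E') -> R) (Z : 'cV_(npar E')) :
  (J (x \o old_edge i) *m rowsub (old_edge i) Z == 0) =
  (inner_coef 1 (char_poly (comp_mx E (fun u v =>
     meval_line (x \o old_edge i) ((fun e => Z e 0) \o old_edge i) (par R E u v)))) == 0) &&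
  (inner_coef 1 (\det (row' i (col' i (char_poly_mx (comp_mx E (fun u v =>
     meval_line (x \o old_edge i) ((fun e => Z e 0) \o old_edge i) (par R E u v))))))) == 0).
Proof.
have lineE : comp_mx E (fun u v => meval_line (x \o old_edge i)
      (fun e => rowsub (old_edge i) Z e 0) (par R E u v)) =
    comp_mx E (fun u v => meval_line (x \o old_edge i)
      ((fun e => Z e 0) \o old_edge i) (par R E u v)).
  by apply: eq_comp_mx => u v; apply: eq_meval_line => // e; rewrite mxE.
by rewrite jacobian_set1_mulmx_eq0 lineE.
Qed.

Lemma rank_jacobian_add_leaf_le (x : 'I_(npar E') -> R) :
  (\rank (J' x) <= \rank (J (x \o old_edge i)) + 2)%N.
Proof.
rewrite -rank_leaf_block_jacobian; apply/mxrankS/submx_colker => Z /eqP.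
rewrite leaf_block_jacobian_mulmx_eq0 old_jacobian_mulmx_eq0.
case/and3P=> /andP[/eqP c1 /eqP d1] /eqP to0 /eqP from0; apply/eqP.
rewrite jacobian_set1_mulmx_eq0 inner_coef1_char_poly_leaf_line inner_coef1_det_leaf_line.
by rewrite c1 d1 to0 from0 !(mulr0, scale0r, scaler0, addr0) eqxx.
Qed.

Lemma rank_jacobian_add_leaf_ge (x : 'I_(npar E) -> R) :
  exists x' : 'I_(npar E') -> R, (\rank (J x) + 2 <= \rank (J' x'))%N.
Proof.
pose D := char_poly (row' i (col' i (comp_mx E (fun u v => (par R E u v).@[x])))).
have [t t_neq0 Dt] := ex_nonroot (monic_neq0 (char_poly_monic _) : D != 0).
pose w (j : 'I_(npar E + 2)) := if split j is inl e then x e else - t.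
have [x' x'E] := ex_extension w 0 (@leaf_edge_inj _ E i).
have x'_old e : x' (old_edge i e) = x e.
  by rewrite -leaf_edge_lshift x'E /w -[lshift 2 e]/(unsplit (inl e)) unsplitK.
have x'_from : x' (edge_from_leaf E i) = - t.
  by rewrite -leaf_edge_rshift1 x'E /w -[rshift _ 1]/(unsplit (inr 1)) unsplitK.
exists x'; rewrite -rank_leaf_block_jacobian; apply/mxrankS/submx_colker => Z /eqP.
rewrite jacobian_set1_mulmx_eq0 => /andP[/eqP cs1 /eqP ds1].
have d0E : inner_coef 0 (\det (row' i (col' i (char_poly_mx (comp_mx E (fun u v =>
    meval_line (x' \o old_edge i) ((fun e => Z e 0) \o old_edge i) (par R E u v))))))) = D.
  rewrite char_poly_row'_col' inner_coef0_char_poly_line; congr (char_poly (row' i (col' i _))).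
  by apply: eq_comp_mx => u v; apply: meval_eq => e; rewrite /= x'_old.
have [||from0 to0 c1 d1] := leaf_line_ker _ _ cs1 ds1.
- by rewrite x'_from oppr_eq0.
- by rewrite d0E x'_from opprK.
apply/eqP; rewrite leaf_block_jacobian_mulmx_eq0.
have -> : J x = J (x' \o old_edge i) by apply: eq_jacobian => e; rewrite /= x'_old.
by rewrite old_jacobian_mulmx_eq0 c1 d1 to0 from0 !eqxx.
Qed.

End LeafRank.

Theorem proposition4p15 (m : nat) (E : rel 'I_m.+2)
    (E_irr : irreflexive E) (E_sc : forall u v, connect E u v) :
  (forall (T : comNzRingType) (a : 'I_m.+3 -> 'I_m.+3 -> T),
    let A := comp_mx E (fun u v => a (lift ord_max u) (lift ord_max v)) in
    let A' := comp_mx (add_leaf E ord0) a in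
    let c := char_poly A in
    let d := \det (row' ord0 (col' ord0 (char_poly_mx A))) in
    let cs := char_poly A' in
    let ds := \det (row' ord_max (col' ord0 (char_poly_mx A'))) in
    let a1n := a ord0 ord_max in
    let an1 := a ord_max ord0 in
    [/\ (forall i, (i <= m.+1)%N -> ds`_i = (-1) ^+ m.+2 * a1n * d`_i),
        (forall i, (1 <= i <= m.+2)%N ->
           cs`_i = c`_i.-1 + a1n * c`_i + an1 * d`_i.-1)
      & cs`_0 = 0 /\ c`_0 = 0]) /\
  (forall R : realFieldType,
    exists r, generic_jac_rank R E [set ord0] [set ord0] r /\
              generic_jac_rank R (add_leaf E ord0) [set ord_max] [set ord0]
                (r + 2)).
Proof.
have l0 : lift ord_max (ord0 : 'I_m.+2) = ord0 by apply/val_inj; exact: lift_max.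
split=> [T a A A' c d cs ds a1n an1|R].
  have cs_eq : cs = ('X + a1n%:P) * c + an1%:P * ('X * d).
    by rewrite /cs /A' char_poly_add_leaf l0.
  have ds_eq : ds = ((-1) ^+ m.+2 * a1n)%:P * d.
    by rewrite /ds /A' -[in col' _]l0 det_leaf_minor l0 add0n.
  have c0 : c`_0 = 0 by exact: char_poly_comp_mx_coef0.
  split=> [j _|j /andP[j_ge1 _]|]; first by rewrite ds_eq coefCM.
    by rewrite cs_eq coefD mulrDl coefD coefXM coefCM coefCM coefXM; case: j j_ge1.
  by rewrite cs_eq mulrDl !coefD !coefCM !coefXM c0 !mulr0 !add0r.
have [x x_max] := @bounded_nat_fun_has_max _
  (fun x => \rank (@jacobian R _ E [set ord0] [set ord0] x)) _ (fun _ => 0)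
  (fun x => rank_leq_col _).
exists (\rank (jacobian [set ord0] [set ord0] x)).
have -> : [set ord0] = [set lift ord_max ord0] :> {set 'I_m.+3} by rewrite l0.
split; first by split; [exists x | exact: x_max].
have rank_le x' := leq_trans (rank_jacobian_add_leaf_le x') (leq_add (x_max _) (leqnn 2)).
split=> [|x']; last exact: rank_le.
have [x' rank_ge] := rank_jacobian_add_leaf_ge ord0 x.
by exists x'; apply/eqP; rewrite eqn_leq rank_le.
Qed.
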